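(* Let $(X_n)_{n\ge0}$ be a Markov chain on a measurable space $E$ with Markov transitions $M(x,dy)$, starting at $X_0=x$, and let $H$ be a positive measurable function on $E$. Assume there exist a positive measurable function $h$ on $E$ (with $0<M(1/h)<\infty$) and parameters $\epsilon_h\in]0,1[$, $\kappa_h\in]0,\infty[$ such that for all $x,y\in E$, $$H^h(x):=H(x)\,h(x)\,M(1/h)(x)\le1-\epsilon_h\quad\text{and}\quad M(1/h)(x)\le\kappa_h\,M(1/h)(y).$$ Let $X^{1/h}_n$ be the Markov chain with transitions $M^{1/h}(x,dy):=M(x,dy)\frac{h^{-1}(y)}{M(h^{-1})(x)}$. Then for any $n\ge1$ and any bounded measurable $F$ on $E^n$, $$\mathbb E\Big(F(X_1,\dots,X_n)\prod_{1\le k\le n}H(X_k)\,\Big|\,X_0=x\Big)=\mathbb E\Big(F(X^{1/h}_1,\dots,X^{1/h}_n)\frac{M(h^{-1})(X^{1/h}_0)}{M(h^{-1})(X^{1/h}_n)}\prod_{1\le k\le n}H^h(X^{1/h}_k)\,\Big|\,X^{1/h}_0=x\Big).$$ Moreover, $$\sup_x\mathbb E\Big(\prod_{1\le k\le n}H(X_k)\,\Big|\,X_0=x\Big)\le\kappa_h(1-\epsilon_h)^n.$$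
   Context: $M(f)(x):=\int M(x,dy)f(y)$ and $h^{-1}:=1/h$. *)

From HB Require Import structures.
From mathcomp Require Import all_boot all_order all_algebra.
From mathcomp Require Import all_classical all_reals all_analysis.
Set Implicit Arguments. Unset Strict Implicit. Unset Printing Implicit Defensive.
Import Order.TTheory GRing.Theory Num.Theory.
Local Open Scope classical_set_scope.
Local Open Scope ring_scope.
Local Open Scope ereal_scope.

Section markov_defs.
Context (R : realType) (d : measure_display) (E : measurableType d).

Definition Mop (M : R.-pker E ~> E) (g : E -> \bar R) (x : E) : \bar R :=
  \int[M x]_y g y.

Definition Minvh (M : R.-pker E ~> E) (h : E -> R) (x : E) : \bar R :=
  \int[M x]_y ((h y)^-1)%:E.

(* M(h^{-1})(x) as a real number (finite under the standing assumption) *)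
Definition mh (M : R.-pker E ~> E) (h : E -> R) (x : E) : R := fine (Minvh M h x).

Definition Hh (M : R.-pker E ~> E) (H h : E -> R) (x : E) : R :=
  (H x * h x * mh M h x)%R.

Definition Mtw (M : R.-pker E ~> E) (h : E -> R) (g : E -> \bar R) (x : E) : \bar R :=
  \int[M x]_y (g y * ((h y)^-1 / mh M h x)%:E).

(* chain_exp K n G x = E( G([:: X_1; ...; X_n]) | X_0 = x ) for the Markov chain
   whose one-step operator is K (K g x = \int K(x,dy) g(y)). *)
Fixpoint chain_exp (K : (E -> \bar R) -> E -> \bar R) (n : nat)
    (G : seq E -> \bar R) (x : E) : \bar R :=
  match n with
  | 0 => G [::]
  | m.+1 => K (fun y => chain_exp K m (fun s => G (y :: s)) y) x
  end.

End markov_defs.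

From HB Require Import structures.
From mathcomp Require Import all_boot all_order all_algebra.
From mathcomp Require Import all_classical all_reals all_analysis.
From mathcomp Require Import ring.
Set Implicit Arguments. Unset Strict Implicit. Unset Printing Implicit Defensive.
Import Order.TTheory GRing.Theory Num.Theory.

Local Open Scope classical_set_scope.
Local Open Scope ring_scope.
Local Open Scope ereal_scope.

(* The twisted chain is Doob's transform of M by h^{-1}: a step from x to y
   carries the weight h^{-1}(y) / M(h^{-1})(x).  Since H = H^h / (h M(h^{-1})),
   these weights telescope along a path and leave only the boundary factor
   M(h^{-1})(x_0) / M(h^{-1})(x_n).  Taking F = 1, the twisted integrand is at
   most kappa_h (1 - eps_h)^n, and the twisted kernel is Markov.
   No measurability is needed anywhere: for nonnegative integrands the
   integral, a supremum over the simple functions below them, is monotone and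
   positively homogeneous regardless. *)

Section integral_without_measurability.
Context (R : realType) d (T : measurableType d) (mu : {measure set T -> \bar R}).
Import HBNNSimple.

Lemma ge0_le_integralT (f g : T -> \bar R) :
  (forall x, 0 <= f x) -> (forall x, f x <= g x) ->
  \int[mu]_x f x <= \int[mu]_x g x.
Proof.
move=> f0 fg; have g0 x := le_trans (f0 x) (fg x).
rewrite !ge0_integralTE //; apply: ereal_sup_le => _ [s sf <-].
by exists s => //= x; exact: le_trans (sf x) (fg x).
Qed.

Let ge0_integralZlT_le (f : T -> \bar R) (k : R) : (0 < k)%R ->
  (forall x, 0 <= f x) ->
  \int[mu]_x (k%:E * f x) <= k%:E * \int[mu]_x f x.
Proof.
move=> k0 f0; have kf0 x : 0 <= k%:E * f x by rewrite mule_ge0 // lee_fin ltW.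
rewrite !ge0_integralTE //; apply/ge_ereal_sup => _ [s sf <-].
have ki0 : (0 <= k^-1)%R by rewrite invr_ge0 ltW.
pose s' := scale_nnsfun s ki0.
have -> : sintegral mu s = k%:E * sintegral mu s'.
  by rewrite sintegralrM muleA -EFinM divff ?mul1e // gt_eqF.
rewrite lee_pmul2l ?lte_fin //; apply: ereal_sup_ubound; exists s' => //= x.
by rewrite EFinM lee_pdivrMl.
Qed.

Lemma ge0_integralZlT (f : T -> \bar R) (k : R) : (0 < k)%R ->
  (forall x, 0 <= f x) ->
  \int[mu]_x (k%:E * f x) = k%:E * \int[mu]_x f x.
Proof.
move=> k0 f0; apply/eqP; rewrite eq_le ge0_integralZlT_le //=.
have ki0 : (0 < k^-1)%R by rewrite invr_gt0.
have := @ge0_integralZlT_le (fun x => k%:E * f x) _ ki0.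
have -> : (fun x => k^-1%:E * (k%:E * f x)) = f.
  by apply/funext => x; rewrite muleA -EFinM mulVf ?mul1e ?gt_eqF.
by rewrite lee_pdivlMl //; apply=> x; rewrite mule_ge0 // lee_fin ltW.
Qed.

Lemma gt0_muleBr (k : R) (a b : \bar R) : (0 < k)%R -> 0 <= a -> 0 <= b ->
  k%:E * (a - b) = k%:E * a - k%:E * b.
Proof.
move=> k0 a0 b0; have [afin|] := boolP (a \is a fin_num).
  by rewrite muleBr //; exact: fin_num_adde_defr.
have [bfin _|] := boolP (b \is a fin_num).
  by rewrite muleBr // fin_num_adde_defl // fin_numN.
rewrite !ge0_fin_numE // -!leNgt !leye_eq => /eqP-> /eqP->.
by rewrite mulry gtr0_sg // mul1e [+oo - +oo]/= mulrNy gtr0_sg // mul1e.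
Qed.

Lemma integralZlT (f : T -> \bar R) (k : R) : (0 < k)%R ->
  \int[mu]_x (k%:E * f x) = k%:E * \int[mu]_x f x.
Proof.
move=> k0; rewrite integralE ge0_funeposM ?ge0_funenegM ?ltW //.
rewrite !ge0_integralZlT // -?gt0_muleBr -?integralE //.
- by apply: integral_ge0 => x _; exact: funepos_ge0.
- by apply: integral_ge0 => x _; exact: funeneg_ge0.
Qed.

End integral_without_measurability.

Lemma eq_chain_exp (R : realType) d (E : measurableType d)
    {K : (E -> \bar R) -> E -> \bar R} {n : nat} (G1 G2 : seq E -> \bar R) {x : E} :
  (forall s, G1 s = G2 s) -> chain_exp K n G1 x = chain_exp K n G2 x.
Proof. by move=> /funext->. Qed.

Section chain_exp_operator.
Context (R : realType) d (E : measurableType d) (K : (E -> \bar R) -> E -> \bar R).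

Lemma chain_expZ (k : R) n (G : seq E -> \bar R) x :
  (forall (k : R) f x, (0 < k)%R -> K (fun y => k%:E * f y) x = k%:E * K f x) ->
  (0 < k)%R ->
  chain_exp K n (fun s => k%:E * G s) x = k%:E * chain_exp K n G x.
Proof.
move=> KZ k0; elim: n G x => [//|n IH] G x /=.
by rewrite -KZ //; congr (K _ x); apply/funext => y; rewrite IH.
Qed.

Hypothesis K_ge0 : forall f x, (forall y, 0 <= f y) -> 0 <= K f x.

Lemma chain_exp_ge0 n (G : seq E -> \bar R) x :
  (forall s, size s = n -> 0 <= G s) -> 0 <= chain_exp K n G x.
Proof.
elim: n G x => [|n IH] G x G0 /=; first exact: G0.
by apply: K_ge0 => y; apply: IH => s sn; apply: G0; rewrite /= sn.
Qed.

Hypothesis le_K : forall f g x,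
  (forall y, 0 <= f y) -> (forall y, f y <= g y) -> K f x <= K g x.

Lemma le_chain_exp n (G1 G2 : seq E -> \bar R) x :
  (forall s, size s = n -> 0 <= G1 s <= G2 s) ->
  chain_exp K n G1 x <= chain_exp K n G2 x.
Proof.
elim: n G1 G2 x => [|n IH] G1 G2 x G12 /=; first by case/andP: (G12 [::] erefl).
have G12y y s : size s = n -> 0 <= G1 (y :: s) <= G2 (y :: s).
  by move=> sn; apply: G12; rewrite /= sn.
apply: le_K => y; last exact: IH (G12y y).
by apply: chain_exp_ge0 => s /(G12y y)/andP[].
Qed.

Lemma chain_exp_cst (c : \bar R) n x :
  (forall x, K (fun=> c) x = c) -> chain_exp K n (fun=> c) x = c.
Proof.
move=> Kc; elim: n x => [//|n IH] x /=.
by rewrite (_ : (fun y => _) = fun=> c) ?Kc //; apply/funext.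
Qed.

End chain_exp_operator.

Section twisted_kernel.
Context (R : realType) d (E : measurableType d) (M : R.-pker E ~> E) (h : E -> R).
Hypothesis h_gt0 : forall x, (0 < h x)%R.
Hypothesis Minvh_fin : forall x, 0 < Minvh M h x /\ Minvh M h x < +oo.

Lemma mh_gt0 x : (0 < mh M h x)%R.
Proof. by apply: fine_gt0; case: (Minvh_fin x) => -> ->. Qed.

Lemma MinvhE x : Minvh M h x = (mh M h x)%:E.
Proof. by rewrite /mh fineK // gt0_fin_numE; case: (Minvh_fin x). Qed.

Lemma MopZ (k : R) f x : (0 < k)%R ->
  Mop M (fun y => k%:E * f y) x = k%:E * Mop M f x.
Proof. exact: integralZlT. Qed.

Lemma MtwE f x :
  Mtw M h f x = (mh M h x)^-1%:E * Mop M (fun y => f y * (h y)^-1%:E) x.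
Proof.
rewrite -MopZ ?invr_gt0 ?mh_gt0 //; apply: eq_integral => y _.
by rewrite muleCA -EFinM mulrC.
Qed.

Let twist_weight_ge0 x y : 0 <= ((h y)^-1 / mh M h x)%:E.
Proof. by rewrite lee_fin divr_ge0 ?invr_ge0 ?ltW ?mh_gt0. Qed.

Lemma Mtw_ge0 f x : (forall y, 0 <= f y) -> 0 <= Mtw M h f x.
Proof. by move=> f0; apply: integral_ge0 => y _; rewrite mule_ge0. Qed.

Lemma le_Mtw f g x : (forall y, 0 <= f y) -> (forall y, f y <= g y) ->
  Mtw M h f x <= Mtw M h g x.
Proof.
by move=> f0 fg; apply: ge0_le_integralT => y; rewrite ?mule_ge0 ?lee_wpmul2r.
Qed.

Lemma Mtw_cst (c : R) x : (0 < c)%R -> Mtw M h (fun=> c%:E) x = c%:E.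
Proof.
move=> c0; rewrite MtwE /Mop integralZlT // -/(Minvh M h x) MinvhE.
by rewrite -!EFinM mulrCA mulVf ?mulr1 ?gt_eqF ?mh_gt0.
Qed.

Context (H : E -> R).

(* The numerator c stays fixed while the starting point moves along the path,
   hence the generalisation over c for the induction. *)
Lemma chain_exp_twist n (G : seq E -> R) (c : R) x :
  chain_exp (Mtw M h) n
    (fun s => (G s * (c / mh M h (last x s)) * \prod_(y <- s) Hh M H h y)%:E) x
  = (mh M h x)^-1%:E *
    chain_exp (Mop M) n (fun s => (c * G s * \prod_(y <- s) H y)%:E) x.
Proof.
elim: n G x => [|n IH] G x /=; first by rewrite !big_nil -EFinM; congr EFin; ring.
rewrite MtwE; congr (_ * _); apply: eq_integral => y _.
have hm_gt0 : (0 < h y * mh M h y)%R by rewrite mulr_gt0 ?mh_gt0.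
have HhE : Hh M H h y = (H y * (h y * mh M h y))%R by rewrite /Hh mulrA.
rewrite (eq_chain_exp
  (G2 := fun s => ((G (y :: s) * Hh M H h y) * (c / mh M h (last y s))
                   * \prod_(z <- s) Hh M H h z)%:E)); last first.
  by move=> s; rewrite big_cons; congr EFin; ring.
rewrite IH (eq_chain_exp (G2 := fun s => (h y * mh M h y)%:E *
    (c * G (y :: s) * \prod_(z <- y :: s) H z)%:E)); last first.
  by move=> s; rewrite big_cons HhE -EFinM; congr EFin; ring.
rewrite chain_expZ //; last by move=> k f z; exact: MopZ.
have weights_cancel : ((h y)^-1 * ((mh M h y)^-1 * (h y * mh M h y)) = 1)%R.
  by field; rewrite !gt_eqF ?mh_gt0.
by rewrite muleA -EFinM muleC muleA -EFinM weights_cancel mul1e.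
Qed.

Lemma chain_exp_h_transform n (F : seq E -> R) x :
  chain_exp (Mop M) n (fun s => (F s * \prod_(y <- s) H y)%:E) x
  = chain_exp (Mtw M h) n
      (fun s => (F s * (mh M h x / mh M h (last x s))
                 * \prod_(y <- s) Hh M H h y)%:E) x.
Proof.
rewrite chain_exp_twist -chain_expZ ?invr_gt0 ?mh_gt0 //; last first.
  by move=> k f z; exact: MopZ.
apply: eq_chain_exp => s; rewrite -EFinM; congr EFin.
by rewrite !mulrA mulVf ?mul1r ?gt_eqF ?mh_gt0.
Qed.

Hypothesis H_gt0 : forall x, (0 < H x)%R.

Lemma twisted_weight_le (eps kappa : R) x s :
  (forall x, Hh M H h x <= 1 - eps)%R ->
  (forall x y, mh M h x <= kappa * mh M h y)%R ->
  (0 <= (mh M h x / mh M h (last x s)) * \prod_(y <- s) Hh M H h y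
     <= kappa * (1 - eps) ^+ size s)%R.
Proof.
move=> Hh_le mh_le.
have Hh_ge0 y : (0 <= Hh M H h y)%R by rewrite /Hh !mulr_ge0 ?ltW ?mh_gt0.
have ratio_ge0 : (0 <= mh M h x / mh M h (last x s))%R.
  by rewrite divr_ge0 ?ltW ?mh_gt0.
rewrite mulr_ge0 ?prodr_ge0 //=; apply: ler_pM => //; first exact: prodr_ge0.
  by rewrite ler_pdivrMr ?mh_gt0.
rewrite -iter_mulr_1 -(count_predT s) -big_const_seq.
by apply: ler_prod => y _; rewrite Hh_ge0 Hh_le.
Qed.

End twisted_kernel.

Local Close Scope ereal_scope.

Theorem mainTheorem11 (R : realType) (d : measure_display) (E : measurableType d)
  (M : R.-pker E ~> E) (H h : E -> R) (eps kappa : R) :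
  measurable_fun [set: E] H -> (forall x, 0 < H x) ->
  measurable_fun [set: E] h -> (forall x, 0 < h x) ->
  (forall x, (0 < Minvh M h x)%E /\ (Minvh M h x < +oo)%E) ->
  0 < eps < 1 -> 0 < kappa ->
  (forall x, Hh M H h x <= 1 - eps) ->
  (forall x y, mh M h x <= kappa * mh M h y) ->
  (forall (n : nat), (1 <= n)%N ->
     forall (F : seq E -> R),
       measurable_fun [set: n.-tuple E] (fun t : n.-tuple E => F (tval t)) ->
       (exists C : R, forall t : n.-tuple E, `|F (tval t)| <= C) ->
       forall x : E,
         chain_exp (Mop M) n
           (fun s => (F s * \prod_(y <- s) H y)%:E) x
         = chain_exp (Mtw M h) n
           (fun s => (F s * (mh M h x / mh M h (last x s))
                       * \prod_(y <- s) Hh M H h y)%:E) x)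
  /\
  (forall (n : nat), (1 <= n)%N ->
     (ereal_sup [set chain_exp (Mop M) n (fun s => (\prod_(y <- s) H y)%:E) x
                | x in [set: E]]
      <= (kappa * (1 - eps) ^+ n)%:E)%E).

Proof.
move=> _ H_gt0 _ h_gt0 Minvh_fin /andP[_ eps_lt1] kappa_gt0 Hh_le mh_le.
have bound_gt0 n : 0 < kappa * (1 - eps) ^+ n by rewrite mulr_gt0 ?exprn_gt0 ?subr_gt0.
split=> [n _ F _ _ x|n _]; first exact: chain_exp_h_transform.
apply: ge_ereal_sup => _ [x _ <-].
rewrite (eq_chain_exp (G2 := fun s => (1 * \prod_(y <- s) H y)%:E));
  last by move=> s; rewrite mul1r.
rewrite (chain_exp_h_transform h_gt0 Minvh_fin).
rewrite -[leRHS](chain_exp_cst (K := Mtw M h) n x); last by move=> z; exact: Mtw_cst.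
apply: le_chain_exp => [f z|f g z|s <-]; [exact: Mtw_ge0|exact: le_Mtw|].
by rewrite mul1r !lee_fin twisted_weight_le.
Qed.
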